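(* Let $(X,\kappa)$ be a finite digital image with simplicial Euler characteristic $\chi(X)\neq 0$, and let $f:X\to X$ be a continuous map strongly homotopic to the identity $\mathrm{id}_X$. Then $f$ has a fixed point or at least two approximate fixed points.
   Context: A digital image is a pair $(X,\kappa)$ where $X$ is a set and $\kappa$ is a symmetric irreflexive relation on $X$ (the adjacency). Write $x\leftrightarrow y$ if adjacent, $x\Leftrightarrow y$ if adjacent or equal. A map $f$ is continuous if $x\leftrightarrow y$ implies $f(x)\Leftrightarrow f(y)$. A point $x$ is an approximate fixed point of $f:X\to X$ if $f(x)\Leftrightarrow x$. The digital interval $[0,m]_{\mathbb Z}$ has consecutive integers adjacent. Continuous $f,g:X\to Y$ are strongly homotopic ($f\simeq^* g$) if there exist $m\ge1$ and $H:X\times[0,m]_{\mathbb Z}\to Y$ with $H(\cdot,0)=f$, $H(\cdot,m)=g$, such that whenever $(x,t)\neq(x',t')$, $x\Leftrightarrow x'$ and $|t-t'|\le1$, we have $H(x,t)\Leftrightarrow H(x',t')$. Simplicial homology: a $q$-simplex of $X$ is a set of $q+1$ pairwise adjacent points. $C_q(X)$ is the free abelian group generated by ordered $q$-simplices $\langle x_0,\dots,x_q\rangle$ modulo $\langle x_{\rho(0)},\dots,x_{\rho(q)}\rangle=\operatorname{sgn}(\rho)\langle x_0,\dots,x_q\rangle$, with boundary $\partial\langle x_0,\dots,x_q\rangle=\sum_{i=0}^q(-1)^i\langle x_0,\dots,\widehat{x_i},\dots,x_q\rangle$; $H_q(X)$ is its homology. The simplicial Euler characteristic is $\chi(X)=\sum_{q\ge0}(-1)^q\operatorname{rank}H_q(X)$.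 *)

From mathcomp Require Import all_boot all_order all_algebra.
Set Implicit Arguments. Unset Strict Implicit. Unset Printing Implicit Defensive.
Import GRing.Theory Num.Theory.
Local Open Scope ring_scope.

Section DigitalImage.
Variables (T : finType) (e : rel T).

Definition adjeq (x y : T) : bool := (x == y) || e x y.

Definition dcontinuous (f : T -> T) : Prop :=
  forall x y, e x y -> adjeq (f x) (f y).

(* strong homotopy from f to g (domain X x [0,m]_Z, time coordinate t <= m) *)
Definition strongly_homotopic (f g : T -> T) : Prop :=
  exists (m : nat) (H : T -> nat -> T),
    (1 <= m)%N /\
    (forall x, H x 0%N = f x) /\ (forall x, H x m = g x) /\
    (forall x x' t t', (t <= m)%N -> (t' <= m)%N ->
        (x, t) <> (x', t') -> adjeq x x' ->
        (t <= t'.+1)%N -> (t' <= t.+1)%N ->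
        adjeq (H x t) (H x' t')).

Definition approx_fixed (f : T -> T) (x : T) : bool := adjeq (f x) x.

Definition simplices (q : nat) : {set {set T}} :=
  [set S : {set T} | (#|S| == q.+1)%N &&
     [forall x in S, forall y in S, (x != y) ==> e x y]].

(* Each simplex is oriented by the order of the vertices given by enum_rank.
   Sign of the face of s obtained by deleting vertex x: (-1)^i, i = position of x. *)
Definition face_sign (s t : {set T}) : rat :=
  if [pick x in s :\: t] is Some x then
    (-1) ^+ #|[set y in s | (enum_rank y < enum_rank x)%N]|
  else 0.

(* matrix of the boundary map d_{q+1} : C_{q+1}(X) -> C_q(X) (acting on rows),
   rational coefficients *)
Definition bdry (q : nat) : 'M[rat]_(#|simplices q.+1|, #|simplices q|) :=
  \matrix_(i, j) (let s : {set T} := enum_val i in let t : {set T} := enum_val j in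
                   if t \subset s then face_sign s t else 0).

Definition rank_d (q : nat) : nat :=
  if q is q'.+1 then \rank (bdry q') else 0%N.

(* rank H_q(X) = dim ker d_q - dim im d_{q+1} (computed over Q) *)
Definition betti (q : nat) : int :=
  (#|simplices q|%:Z - (rank_d q)%:Z - (rank_d q.+1)%:Z)%R.

(* simplices have dimension < #|T|, so the sum is finite *)
Definition euler_char : int :=
  \sum_(q < #|T|.+1) (-1) ^+ q * betti q.

End DigitalImage.

(* A self-map g of X acts on the poset of cliques by s |-> g(s).  For a finite
   poset P let chain_sum P be the signed count of its chains, i.e. 1 - chi of
   its order complex.  Cliques are simplices and the order complex of the face
   poset is the barycentric subdivision, so chain_sum of all cliques is
   1 - chi(X).  If f <= g are monotone self-maps of a finite poset, their
   fixed-point subposets have the same chain_sum: iterating g (resp. f)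
   retracts one onto the other through closure operators, and a monotone
   deflation does not change chain_sum.  Consecutive stages H_t, H_{t+1} of a
   strong homotopy are both dominated by s |-> H_t(s) u H_{t+1}(s), hence the
   cliques fixed by f have chain_sum 1 - chi(X), as those fixed by id.  A map
   without approximate fixed points fixes no clique (f(s) = s and x in s give
   f(x) <=> x), which would force 1 - chi(X) = chain_sum(empty) = 1.  So f has an
   approximate fixed point x, and if f(x) <> x, continuity makes f(x) a second one. *)

From mathcomp Require Import all_boot all_order all_algebra ring zify.
Set Implicit Arguments. Unset Strict Implicit. Unset Printing Implicit Defensive.
Import GRing.Theory Num.Theory.
Local Open Scope ring_scope.

Section ChainSum.
Variables (U : finType) (le : rel U).

Definition chain (c : {set U}) : bool :=
  [forall x in c, forall y in c, (x != y) ==> le x y || le y x].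

Lemma chainP (c : {set U}) :
  reflect {in c &, forall x y, x != y -> le x y || le y x} (chain c).
Proof.
apply: (iffP forallP) => [H x y xc yc | H x].
  by move: (H x); rewrite xc /= => /forallP/(_ y); rewrite yc /= => /implyP.
by apply/implyP => xc; apply/forallP => y; apply/implyP => yc; apply/implyP; apply: H.
Qed.

Lemma chain_sub (c d : {set U}) : c \subset d -> chain d -> chain c.
Proof. by move=> cd /chainP ch; apply/chainP => x y xc yc; apply: ch; apply: (subsetP cd). Qed.

Definition chain_sum (A : {set U}) : int :=
  \sum_(c : {set U} | (c \subset A) && chain c) (-1) ^+ #|c|.

Definition below (A : {set U}) (x : U) := [set y in A | (y != x) && le y x].
Definition above (A : {set U}) (x : U) := [set y in A | (y != x) && le x y].
Definition comparables (A : {set U}) (x : U) := below A x :|: above A x.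

Definition fixpoints (A : {set U}) (f : U -> U) := [set x in A | f x == x].

Lemma in_comparables (A : {set U}) x y :
  (y \in comparables A x) = [&& y \in A, y != x & le x y || le y x].
Proof. by rewrite !inE; case: (y \in A) (y != x) => [] []; rewrite //= orbC. Qed.

Lemma chain_sum0 : chain_sum set0 = 1.
Proof.
rewrite /chain_sum (big_pred1 set0); first by rewrite cards0.
move=> c /=; rewrite subset0; have [->|] := eqVneq c set0; last by [].
by apply/chainP => x y; rewrite inE.
Qed.

Lemma chain_setU1 (A c : {set U}) x : x \in A -> x \notin c ->
  ((x |: c \subset A) && chain (x |: c)) = (c \subset comparables A x) && chain c.
Proof.
move=> xA xNc; rewrite subUset sub1set xA /=.
have yNx y : y \in c -> y != x by move=> yc; apply: contraNneq xNc => <-.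
apply/andP/andP => [[cA ch] | [cx ch]]; split.
- apply/subsetP => y yc; rewrite in_comparables (subsetP cA) // yNx //=.
  by move/chainP: ch; apply; rewrite ?setU11 ?setU1r // eq_sym yNx.
- exact: chain_sub (subsetUr _ _) ch.
- by apply/subsetP => y /(subsetP cx); rewrite in_comparables => /andP[].
apply/chainP => y z; rewrite !inE => /predU1P[-> | yc] /predU1P[-> | zc];
  rewrite ?eqxx // => yz.
- by move: (subsetP cx z zc); rewrite in_comparables => /and3P[].
- by move: (subsetP cx y yc); rewrite in_comparables orbC => /and3P[].
- by move/chainP: ch; apply.
Qed.

Lemma chain_sumD1 (A : {set U}) x : x \in A ->
  chain_sum A = chain_sum (A :\ x) - chain_sum (comparables A x).
Proof.
move=> xA; rewrite /chain_sum (bigID (fun c : {set U} => x \in c)) /= addrC.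
congr (_ + _); first by apply: eq_bigl => c; rewrite subsetD1 andbAC.
rewrite -sumrN (reindex_onto (fun c => x |: c) (fun c => c :\ x)); last first.
  by move=> c /andP[_ xc]; rewrite setD1K.
apply: eq_big => [c | c /andP[_ /eqP cx]]; last first.
  have xNc : x \notin c by rewrite -cx !inE eqxx.
  by rewrite cardsU1 xNc exprS mulN1r.
rewrite setU11 andbT; case xc: (x \in c); last first.
  by rewrite setU1K ?xc // eqxx andbT chain_setU1 ?xc.
have -> : ((x |: c) :\ x == c) = false.
  by apply/negbTE; apply: contraTneq xc => <-; rewrite !inE eqxx.
rewrite andbF; apply/esym/negbTE/negP => /andP[/subsetP/(_ x xc)].
by rewrite in_comparables eqxx andbF.
Qed.

Lemma chain_sum_cone (A : {set U}) m : m \in A -> {in A, forall y, le y m} -> chain_sum A = 0.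
Proof.
move=> mA lem; rewrite (chain_sumD1 mA).
suff -> : comparables A m = A :\ m by rewrite subrr.
apply/setP => y; rewrite in_comparables !inE andbC.
case yA: (y \in A); rewrite ?andbF ?andbT //=.
by rewrite (lem y yA) orbT andbT.
Qed.
End ChainSum.

Lemma chain_sum_dual (U : finType) (le : rel U) (A : {set U}) :
  chain_sum (fun x y => le y x) A = chain_sum le A.
Proof.
apply: eq_bigl => c; congr (_ && _).
by apply/chainP/chainP => ch x y xc yc xy; rewrite orbC; apply: ch.
Qed.

Section SetImages.
Variables (U V : finType) (A : {set U}) (r : U -> V).

Lemma imset_in_sub (B : {set V}) (c : {set U}) :
  {in A, forall x, r x \in B} -> c \subset A -> r @: c \subset B.
Proof. by move=> rA cA; apply/subsetP => _ /imsetP[x xc ->]; apply/rA/(subsetP cA). Qed.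

Lemma imset_in_cancel (s : V -> U) (c : {set U}) :
  {in A, cancel r s} -> c \subset A -> s @: (r @: c) = c.
Proof.
move=> srK cA; rewrite -imset_comp (eq_in_imset (g := id)) ?imset_id //.
by move=> x xc /=; apply: srK; apply: (subsetP cA).
Qed.

Lemma chain_imset (leU : rel U) (leV : rel V) (c : {set U}) :
    {in A &, {homo r : x y / leU x y >-> leV x y}} ->
  c \subset A -> chain leU c -> chain leV (r @: c).
Proof.
move=> r_mono cA /chainP ch; apply/chainP => _ _ /imsetP[x xc ->] /imsetP[y yc ->] rxy.
have xy : x != y by apply: contraNneq rxy => ->.
have [xA yA] := (subsetP cA x xc, subsetP cA y yc).
by case/orP: (ch x y xc yc xy) => /r_mono-> //; rewrite orbT.
Qed.

End SetImages.

Lemma chain_sum_iso (U V : finType) (leU : rel U) (leV : rel V)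
    (A : {set U}) (B : {set V}) (r : U -> V) (s : V -> U) :
  {in A, forall x, r x \in B} -> {in B, forall y, s y \in A} ->
  {in A, cancel r s} -> {in B, cancel s r} ->
  {in A &, {homo r : x y / leU x y >-> leV x y}} ->
  {in B &, {homo s : x y / leV x y >-> leU x y}} ->
  chain_sum leU A = chain_sum leV B.
Proof.
move=> rA sB srK rsK r_mono s_mono; rewrite /chain_sum.
rewrite (reindex_onto (fun c : {set V} => s @: c) (fun c => r @: c)); last first.
  by move=> c /andP[cA _]; exact: (imset_in_cancel srK cA).
apply: eq_big => [c | c /andP[/andP[scA _] /eqP rsc]].
  apply/idP/idP => [/andP[/andP[scA ch] /eqP <-] | /andP[cB ch]].
    by rewrite (imset_in_sub rA scA) (chain_imset r_mono scA ch).
  rewrite (imset_in_sub sB cB) (chain_imset s_mono cB ch) /=.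
  by rewrite (imset_in_cancel rsK cB).
have cB : c \subset B by rewrite -rsc (imset_in_sub rA scA).
rewrite card_in_imset // => x y xc yc /= sxy.
by rewrite -(rsK x (subsetP cB x xc)) sxy rsK // (subsetP cB).
Qed.

Section Poset.
Variables (U : finType) (le : rel U).
Hypotheses (le_refl : reflexive le) (le_anti : antisymmetric le) (le_trans : transitive le).

Lemma exists_maximal (S : {set U}) : S != set0 ->
  exists2 u, u \in S & {in S, forall b, le u b -> b = u}.
Proof.
case/set0Pn => u0 u0S.
have [u uS umax] := arg_maxnP (fun u => #|[set y in S | le y u]|) u0S.
exists u => // b bS ub; apply/eqP/negPn/negP => bNu.
have : (#|[set y in S | le y u]| < #|[set y in S | le y b]|)%N.
  apply: proper_card; apply/properP; split.
    by apply/subsetP => y; rewrite !inE => /andP[-> /le_trans]; apply.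
  exists b; rewrite !inE ?bS ?le_refl //=.
  by apply: contra bNu => bu; apply/eqP/le_anti; rewrite bu ub.
by move: (umax b bS); rewrite /= leqNgt => /negP.
Qed.

Lemma comparables_maximal (A : {set U}) u : {in A, forall b, le u b -> b = u} ->
  comparables le A u = below le A u.
Proof.
move=> umax; rewrite /comparables; apply/setUidPl/subsetP => y.
rewrite !inE => /and3P[yA yu uy].
by move: yu; rewrite (umax y yA uy) eqxx.
Qed.

Lemma chain_sum_ordinal_sum (D B : {set U}) :
    {in D & B, forall d b, (d != b) && le d b} ->
  chain_sum le (D :|: B) = chain_sum le D * chain_sum le B.
Proof.
move=> DB; have [n] := ubnP #|B|; elim: n => // n IH in B DB *; rewrite ltnS => cB.
have [-> | B0] := eqVneq B set0; first by rewrite setU0 chain_sum0 mulr1.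
have [u uB umax] := exists_maximal B0.
have uND : u \notin D by apply/negP => uD; move: (DB u u uD uB); rewrite eqxx.
have umaxDB : {in D :|: B, forall b, le u b -> b = u}.
  move=> y; rewrite inE => /orP[yD uy | /umax//].
  by case/andP: (DB y u yD uB) => yNu yu; apply: le_anti; rewrite yu.
have uDB : u \in D :|: B by rewrite inE uB orbT.
have belowDB : below le (D :|: B) u = D :|: below le B u.
  apply/setP => y; rewrite !inE; case yD: (y \in D) => /=; last by [].
  by case/andP: (DB y u yD uB) => -> ->.
have DBu : (D :|: B) :\ u = D :|: (B :\ u).
  by apply/setP => y; rewrite !inE; case: eqVneq => // ->; rewrite (negbTE uND).
have DB' (B' : {set U}) : B' \subset B -> {in D & B', forall d b, (d != b) && le d b}.
  by move=> sB d b dD /(subsetP sB); apply: DB.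
have cBu : (#|B :\ u| < n)%N by apply: leq_trans cB; rewrite (cardsD1 u B) uB.
have sbelow : below le B u \subset B :\ u.
  by apply/subsetP => y; rewrite !inE => /and3P[-> -> _].
rewrite (chain_sumD1 le uDB) (chain_sumD1 le uB) !comparables_maximal //.
rewrite DBu belowDB !IH ?mulrBr //; first exact: DB' (subset_trans sbelow (subsetDl _ _)).
- exact: leq_ltn_trans (subset_leq_card sbelow) cBu.
- exact: DB' (subsetDl _ _).
Qed.

Lemma below_lt_above (A : {set U}) x :
  {in below le A x & above le A x, forall d b, (d != b) && le d b}.
Proof.
move=> d b; rewrite !inE => /and3P[_ dNx dx] /and3P[_ bNx xb].
rewrite (le_trans dx xb) andbT; apply: contra dNx => /eqP db.
by apply/eqP/le_anti; rewrite dx db.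
Qed.

Section Deflation.
Variables (A : {set U}) (f : U -> U).
Hypotheses (fA : {in A, forall x, f x \in A}) (f_mono : {in A &, {homo f : x y / le x y}}).
Hypothesis f_defl : {in A, forall x, le (f x) x}.

Lemma below_deflation_stable x : {in below le A x, forall y, f y \in below le A x}.
Proof.
move=> y; rewrite !inE => /and3P[yA yNx yx]; rewrite fA //=.
rewrite (le_trans (f_defl yA) yx) andbT; apply: contra yNx => /eqP fyx.
by apply/eqP/le_anti; rewrite yx -fyx f_defl.
Qed.

Lemma fixpoints_below x : x \in A ->
  fixpoints (below le A x) f = fixpoints [set y in below le A x | le y (f x)] f.
Proof.
move=> xA; apply/setP => y; rewrite !inE.
case: (eqVneq (f y) y) => [fyy|]; rewrite ?andbF ?andbT //.
apply/idP/idP => [yD | /andP[] //]; rewrite yD; case/and3P: yD => yA _ yx.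
by rewrite -fyy f_mono.
Qed.

End Deflation.

(* Remove a maximal moved point [x]: its link is the ordinal sum of the points
   below and above [x], and [f] contracts the lower part onto the cone under [f x]. *)
Lemma chain_sum_fixpoints_deflation (A : {set U}) (f : U -> U) :
    {in A, forall x, f x \in A} -> {in A &, {homo f : x y / le x y}} ->
    {in A, forall x, le (f x) x} ->
  chain_sum le A = chain_sum le (fixpoints A f).
Proof.
have [n] := ubnP #|A|; elim: n => // n IH in A *; rewrite ltnS => cA fA f_mono f_defl.
have [fixA | ] := eqVneq [set y in A | f y != y] set0.
  congr chain_sum; apply/setP => y; rewrite inE.
  case yA: (y \in A) => //=; apply/esym/negPn/negP => fy.
  by move/setP: fixA => /(_ y); rewrite !inE yA fy.
case/exists_maximal => x; rewrite inE => /andP[xA fxNx] xmax.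
have IHsub (S : {set U}) : S \subset A :\ x -> {in S, forall y, f y \in S} ->
    chain_sum le S = chain_sum le (fixpoints S f).
  move=> SAx fS; have SA := subset_trans SAx (subsetDl A [set x]).
  apply: IH fS _ _; last by move=> y /(subsetP SA); apply: f_defl.
  - by apply: leq_trans cA; apply: leq_ltn_trans (subset_leq_card SAx) (proper_card (properD1 xA)).
  - by move=> y z /(subsetP SA) yA /(subsetP SA) zA; apply: f_mono.
have fAx : {in A :\ x, forall y, f y \in A :\ x}.
  move=> y; rewrite !inE => /andP[yNx yA]; rewrite fA // andbT.
  apply: contra (yNx) => /eqP fyx; apply/eqP/xmax; last by rewrite -fyx f_defl.
  by rewrite inE yA fyx eq_sym.
have fixAx : fixpoints A f = fixpoints (A :\ x) f.
  by apply/setP => y; rewrite !inE; case: (eqVneq y x) => [->|]; rewrite ?(negbTE fxNx) ?andbF.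
set D := below le A x; set R := [set y in D | le y (f x)].
have DAx : D \subset A :\ x by apply/subsetP => y; rewrite !inE => /and3P[-> -> _].
have fD := below_deflation_stable fA f_defl (x := x).
have RAx : R \subset A :\ x by apply: subset_trans DAx; apply/subsetP => y; rewrite inE => /andP[].
have fR : {in R, forall y, f y \in R}.
  move=> y; rewrite inE => /andP[yD yfx]; rewrite inE fD //=.
  by rewrite (le_trans (f_defl y _) yfx) // (subsetP (subset_trans DAx (subsetDl _ _))).
have fxR : f x \in R by rewrite !inE fA // fxNx f_defl // le_refl.
have chain_sumD : chain_sum le D = 0.
  rewrite IHsub // (fixpoints_below f_mono xA) -IHsub //.
  by apply: chain_sum_cone fxR _ => y; rewrite inE => /andP[].
rewrite (chain_sumD1 le xA) fixAx -IHsub // /comparables chain_sum_ordinal_sum.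
  by rewrite chain_sumD mul0r subr0.
exact: below_lt_above.
Qed.

Lemma le_iter (g : U -> U) x : {homo g : a b / le a b} -> le x (g x) ->
  forall k, le x (iter k g x) /\ le (iter k g x) (iter k.+1 g x).
Proof.
move=> g_mono xgx; elim=> [|k [x_k k_k1]] //=; split; first exact: le_trans k_k1.
exact: g_mono.
Qed.

(* The down-sets of the iterates grow strictly until a fixed point is reached. *)
Lemma iter_inflation_fixed (g : U -> U) x : {homo g : a b / le a b} -> le x (g x) ->
  g (iter #|U| g x) = iter #|U| g x.
Proof.
move=> g_mono xgx; have up k := (le_iter g_mono xgx k).2.
pose down k := [set y | le y (iter k g x)].
suff grow k : (g (iter k g x) == iter k g x) || (k < #|down k|)%N.
  by case/orP: (grow #|U|) => [/eqP // | ]; rewrite ltnNge max_card.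
elim: k => [|k IH]; first by apply/orP; right; apply/card_gt0P; exists x; rewrite inE le_refl.
have [fix_k | nfix_k] := eqVneq (g (iter k g x)) (iter k g x).
  by rewrite /= !fix_k eqxx.
rewrite (negbTE nfix_k) /= in IH; apply/orP; right; apply: leq_ltn_trans IH _.
apply: proper_card; apply/properP; split.
  by apply/subsetP => y; rewrite !inE => /le_trans; apply; apply: up.
exists (iter k.+1 g x); rewrite !inE ?le_refl //.
by apply: contra nfix_k => le_k1_k; apply/eqP/le_anti; rewrite le_k1_k up.
Qed.

End Poset.

Section Duality.
Variables (U : finType) (le : rel U).
Hypotheses (le_refl : reflexive le) (le_anti : antisymmetric le) (le_trans : transitive le).

Let ge := fun x y => le y x.
Let ge_refl : reflexive ge. Proof. exact: le_refl. Qed.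
Let ge_anti : antisymmetric ge. Proof. by move=> x y; rewrite andbC; apply: le_anti. Qed.
Let ge_trans : transitive ge. Proof. by move=> y x z xy yz; apply: le_trans yz xy. Qed.

Lemma chain_sum_fixpoints_inflation (A : {set U}) (f : U -> U) :
    {in A, forall x, f x \in A} -> {in A &, {homo f : x y / le x y}} ->
    {in A, forall x, le x (f x)} ->
  chain_sum le A = chain_sum le (fixpoints A f).
Proof.
move=> fA f_mono f_infl; rewrite -!(chain_sum_dual le).
apply: (chain_sum_fixpoints_deflation ge_refl ge_anti ge_trans fA _ f_infl).
by move=> x y xA yA; apply: f_mono.
Qed.

Lemma iter_deflation_fixed (g : U -> U) x : {homo g : a b / le a b} -> le (g x) x ->
  g (iter #|U| g x) = iter #|U| g x.
Proof. by move=> g_mono; apply: (iter_inflation_fixed ge_refl ge_anti ge_trans) => a b; apply: g_mono. Qed.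

(* Iterating [g] (resp. [f]) [#|U|] times retracts the fixed points of [f]
   onto those of [g] (resp. back); both composites are closure operators. *)
Lemma chain_sum_fixpoints_le (P : {set U}) (f g : U -> U) :
    {homo f : x / x \in P} -> {homo g : x / x \in P} ->
    {homo f : x y / le x y} -> {homo g : x y / le x y} ->
    {in P, forall x, le (f x) (g x)} ->
  chain_sum le (fixpoints P f) = chain_sum le (fixpoints P g).
Proof.
move=> fP gP f_mono g_mono fg.
set A := fixpoints P f; set B := fixpoints P g.
set r := iter #|U| g; set s := iter #|U| f.
have iter_mono h k : {homo h : x y / le x y} -> {homo iter k h : x y / le x y}.
  by move=> h_mono x y xy; elim: k => //= k; apply: h_mono.
have [r_mono s_mono] := (iter_mono g #|U| g_mono, iter_mono f #|U| f_mono).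
have A_r a : a \in A -> [/\ r a \in B, le a (r a) & s a = a].
  rewrite inE => /andP[aP /eqP fa]; have aga : le a (g a) by rewrite -{1}fa fg.
  split; last exact: iter_fix.
  - by rewrite inE iter_in //= (iter_inflation_fixed le_refl le_anti le_trans g_mono aga).
  - exact: (le_iter le_refl le_trans g_mono aga #|U|).1.
have B_s b : b \in B -> [/\ s b \in A, le (s b) b & r b = b].
  rewrite inE => /andP[bP /eqP gb]; have fbb : le (f b) b by rewrite -{2}gb fg.
  split; last exact: iter_fix.
  - by rewrite inE iter_in //= iter_deflation_fixed.
  - exact: (le_iter ge_refl ge_trans (fun x y => @f_mono y x) fbb #|U|).1.
rewrite (chain_sum_fixpoints_inflation (f := s \o r)); first last.
- by move=> a /A_r[_ ara sa] /=; rewrite -{1}sa; apply: s_mono.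
- by move=> x y _ _ xy; apply/s_mono/r_mono.
- by move=> a /A_r[/B_s[sra _ _] _ _].
rewrite [RHS](chain_sum_fixpoints_deflation le_refl le_anti le_trans (f := r \o s)); first last.
- by move=> b /B_s[_ sbb rb] /=; rewrite -{2}rb; apply: r_mono.
- by move=> x y _ _ xy; apply/r_mono/s_mono.
- by move=> b /B_s[/A_r[rsb _ _] _ _].
apply: (chain_sum_iso (r := r) (s := s)) => [a | b | a | b | a c _ _ | b c _ _].
- by rewrite inE => /andP[/A_r[rB _ _] /eqP /= sra]; rewrite inE rB /= sra.
- by rewrite inE => /andP[/B_s[sA _ _] /eqP /= rsb]; rewrite inE sA /= rsb.
- by rewrite inE => /andP[_ /eqP].
- by rewrite inE => /andP[_ /eqP].
- exact: r_mono.
- exact: s_mono.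
Qed.

End Duality.

Section Complexes.
Variable T : finType.

Definition subset_rel : rel {set T} := fun A B => A \subset B.

Lemma subset_rel_refl : reflexive subset_rel. Proof. exact: subxx. Qed.
Lemma subset_rel_anti : antisymmetric subset_rel.
Proof. by move=> A B; rewrite -eqEsubset => /eqP. Qed.
Lemma subset_rel_trans : transitive subset_rel.
Proof. by move=> B A C; apply: subset_trans. Qed.

Definition euler_faces (P : {set {set T}}) : int := \sum_(s in P) (-1) ^+ #|s|.+1.

Definition proper_faces (s : {set T}) := [set t : {set T} | (t != set0) && (t \proper s)].

Definition face_closed (P : {set {set T}}) :=
  {in P, forall s t : {set T}, t \subset s -> t != set0 -> t \in P}.

Lemma sum_sign_subsets (s : {set T}) : s != set0 ->
  \sum_(t : {set T} | t \subset s) (-1) ^+ #|t| = 0 :> int.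
Proof.
case/set0Pn => x xs; transitivity (chain_sum (fun _ _ => true) s); last exact: chain_sum_cone xs _.
apply: eq_bigl => c.
by have /chainP-> : {in c &, forall x y, x != y -> true || true} by []; rewrite andbT.
Qed.

Lemma euler_proper_faces (s : {set T}) : s != set0 ->
  euler_faces (proper_faces s) = 1 + (-1) ^+ #|s|.
Proof.
move=> s0; have := sum_sign_subsets s0.
rewrite (bigD1 s) //= (bigD1 set0) ?sub0set 1?eq_sym //= cards0 expr0.
have -> : euler_faces (proper_faces s) =
    - \sum_(t : {set T} | (t \subset s) && (t != s) && (t != set0)) (-1) ^+ #|t|.
  rewrite /euler_faces -sumrN; apply: eq_big => [t | t _]; last by rewrite exprS mulN1r.
  by rewrite inE properEneq andbC; case: (t \subset s) (t != s) (t != set0) => [] [] [].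
by move: (\sum_(_ | _) _) ((-1) ^+ #|s|) => S c; lia.
Qed.

Lemma face_closedD1 (P : {set {set T}}) (s : {set T}) :
  face_closed P -> {in P, forall t, subset_rel s t -> t = s} -> face_closed (P :\ s).
Proof.
move=> Pc smax t; rewrite !inE => /andP[tNs tP] u ut u0; rewrite !inE (Pc t tP u) // andbT.
by apply: contraNneq tNs => us; apply/eqP/smax; rewrite // /subset_rel -us.
Qed.

Lemma face_closed_proper_faces (s : {set T}) : face_closed (proper_faces s).
Proof.
by move=> t; rewrite !inE => /andP[_ ts] u ut u0; rewrite !inE u0; apply: sub_proper_trans ut ts.
Qed.

Lemma below_maximal_face (P : {set {set T}}) (s : {set T}) : set0 \notin P -> face_closed P ->
  s \in P -> below subset_rel P s = proper_faces s.
Proof.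
move=> P0 Pc sP; apply/setP => t; rewrite !inE properEneq /subset_rel.
case: (t != s) => //=; case ts: (t \subset s); rewrite ?andbF ?andbT //.
by case: (eqVneq t set0) => [-> | t0]; rewrite ?(negbTE P0) ?(Pc s sP t ts t0).
Qed.

Lemma chain_sum_complex (P : {set {set T}}) : set0 \notin P -> face_closed P ->
  chain_sum subset_rel P = 1 - euler_faces P.
Proof.
have [n] := ubnP #|P|; elim: n => // n IH in P *; rewrite ltnS => cP P0 Pc.
have [-> | PN0] := eqVneq P set0; first by rewrite chain_sum0 /euler_faces big_set0 subr0.
have [s sP smax] := exists_maximal subset_rel_refl subset_rel_anti subset_rel_trans PN0.
have s0 : s != set0 by apply: contraNneq P0 => <-.
have cPs : (#|P :\ s| < n)%N by apply: leq_trans cP; rewrite (cardsD1 s P) sP.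
have facesPs : proper_faces s \subset P :\ s.
  rewrite -(below_maximal_face P0 Pc sP); apply/subsetP => t.
  by rewrite !inE => /and3P[-> -> _].
rewrite (chain_sumD1 _ sP) comparables_maximal // (below_maximal_face P0 Pc sP).
have cfaces : (#|proper_faces s| < n)%N := leq_ltn_trans (subset_leq_card facesPs) cPs.
have P0s : set0 \notin P :\ s by rewrite !inE negb_and P0 orbT.
have faces0 : set0 \notin proper_faces s by rewrite inE eqxx.
rewrite (IH _ cPs P0s (face_closedD1 Pc smax)).
rewrite (IH _ cfaces faces0 (@face_closed_proper_faces s)).
have -> : euler_faces P = euler_faces (P :\ s) + (-1) ^+ #|s|.+1.
  rewrite /euler_faces (bigD1 s sP) addrC; congr (_ + _).
  by apply: eq_bigl => t; rewrite !inE andbC.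
rewrite euler_proper_faces // exprS.
by move: (euler_faces _) ((-1) ^+ #|s|) => E c; lia.
Qed.

End Complexes.

Arguments subset_rel {T}.
Arguments subset_rel_refl {T}.
Arguments subset_rel_anti {T}.
Arguments subset_rel_trans {T}.

Section Cliques.
Variables (T : finType) (e : rel T).

Definition cliques : {set {set T}} :=
  [set s : {set T} | (s != set0) && [forall x in s, forall y in s, adjeq e x y]].

Lemma cliqueP (s : {set T}) :
  reflect {in s &, forall x y, adjeq e x y} [forall x in s, forall y in s, adjeq e x y].
Proof.
apply: (iffP forallP) => [cl x y xs ys | cl x].
  by move: (cl x); rewrite xs /= => /forallP/(_ y); rewrite ys.
by apply/implyP => xs; apply/forallP => y; apply/implyP; apply: cl.
Qed.

Lemma in_simplices q (s : {set T}) :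
  (s \in simplices e q) = (#|s| == q.+1)%N && [forall x in s, forall y in s, adjeq e x y].
Proof.
rewrite inE; congr (_ && _); apply/forallP/cliqueP => [cl x y xs ys | cl x].
  rewrite /adjeq; case: eqVneq => //= xy.
  by move: (cl x); rewrite xs /= => /forallP/(_ y); rewrite ys xy.
apply/implyP => xs; apply/forallP => y; apply/implyP => ys; apply/implyP => xy.
by move: (cl x y xs ys); rewrite /adjeq (negbTE xy).
Qed.

Lemma rank_d_top : rank_d e #|T|.+1 = 0%N.
Proof.
apply/eqP; rewrite -leqn0 (leq_trans (rank_leq_row _)) // leqn0 cards_eq0.
apply/eqP/setP => s; rewrite in_simplices inE.
by case: eqP => // sT; move: (max_card (mem s)); rewrite [#|mem s|]sT; lia.
Qed.

Lemma euler_char_simplices :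
  euler_char e = \sum_(q < #|T|.+1) (-1) ^+ q * (#|simplices e q|)%:Z.
Proof.
pose r q := (rank_d e q)%:Z.
have -> : euler_char e = \sum_(q < #|T|.+1) (-1) ^+ q * (#|simplices e q|)%:Z
    - \sum_(q < #|T|.+1) (-1) ^+ q * (r q + r q.+1).
  rewrite -sumrB; apply: eq_bigr => q _; rewrite -mulrBr opprD addrA //.
rewrite -(big_mkord xpredT (fun q => (-1) ^+ q * (r q + r q.+1))).
rewrite (telescope_sumr_eq (fun q => - ((-1) ^+ q * r q))) // => [|q _].
  have [r0 rN] : r 0%N = 0 /\ r #|T|.+1 = 0 by rewrite /r rank_d_top.
  by rewrite r0 rN !mulr0 !oppr0 !subr0.
by rewrite exprS; ring.
Qed.

Lemma euler_char_cliques : euler_char e = euler_faces cliques.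
Proof.
rewrite euler_char_simplices /euler_faces.
rewrite (partition_big (fun s : {set T} => inord #|s|.-1 : 'I_#|T|.+1) xpredT) //=.
apply: eq_bigr => q _; rewrite (eq_bigl (fun s => s \in simplices e q)) => [|s]; last first.
  rewrite in_simplices inE andbAC; case: (eqVneq s set0) => [-> | s0] /=.
    by rewrite cards0.
  have s_gt0 : (0 < #|s|)%N by rewrite card_gt0.
  congr (_ && _); rewrite -val_eqE /= inordK; last by rewrite ltnS (leq_trans (leq_pred _)) ?max_card.
  by rewrite -eqSS prednK.
rewrite (eq_bigr (fun _ => (-1) ^+ q)) => [|s]; first by rewrite sumr_const -mulr_natr natz.
by rewrite in_simplices => /andP[/eqP-> _]; rewrite !exprS !mulN1r opprK.
Qed.

Lemma chain_sum_cliques : chain_sum subset_rel cliques = 1 - euler_char e.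
Proof.
rewrite euler_char_cliques chain_sum_complex //; first by rewrite inE eqxx.
move=> s; rewrite !inE => /andP[_ /cliqueP cl] t ts t0; rewrite inE t0 /=.
by apply/cliqueP => x y xt yt; apply: cl; apply: (subsetP ts).
Qed.

End Cliques.

Section FixedCliques.
Variables (T : finType) (e : rel T).

Definition close_maps (g h : T -> T) := forall x y, adjeq e x y -> adjeq e (g x) (h y).

Definition fixed_cliques (g : T -> T) := fixpoints (cliques e) (fun s : {set T} => g @: s).

Lemma clique_imsetU (g h : T -> T) (s : {set T}) :
    close_maps g g -> close_maps h h -> close_maps g h -> close_maps h g ->
  s \in cliques e -> g @: s :|: h @: s \in cliques e.
Proof.
move=> gg hh gh hg; rewrite inE => /andP[s0 /cliqueP cl]; rewrite inE; apply/andP; split.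
  by case/set0Pn: s0 => x xs; apply/set0Pn; exists (g x); rewrite inE imset_f.
apply/cliqueP => u v; rewrite !inE.
by do 2![case/orP=> /imsetP[? ? ->]]; [apply: gg | apply: gh | apply: hg | apply: hh]; apply: cl.
Qed.

Lemma chain_sum_fixed_cliques_close (g h : T -> T) :
    close_maps g g -> close_maps h h -> close_maps g h -> close_maps h g ->
  chain_sum subset_rel (fixed_cliques g) = chain_sum subset_rel (fixed_cliques h).
Proof.
move=> gg hh gh hg; pose k (s : {set T}) := g @: s :|: h @: s.
have k_cl : {homo k : s / s \in cliques e} by move=> s; apply: clique_imsetU.
have img_cl (g' : T -> T) : close_maps g' g' ->
    {homo (fun s : {set T} => g' @: s) : s / s \in cliques e}.
  by move=> gg' s sC; rewrite -[g' @: s]setUid; apply: clique_imsetU.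
have k_mono : {homo k : s t / subset_rel s t} by move=> s t st; apply: setUSS; apply: imsetS.
have img_mono (g' : T -> T) : {homo (fun s : {set T} => g' @: s) : s t / subset_rel s t}.
  by move=> s t; apply: imsetS.
rewrite /fixed_cliques.
rewrite (chain_sum_fixpoints_le subset_rel_refl subset_rel_anti subset_rel_trans
  (img_cl g gg) k_cl (img_mono g) k_mono); last by move=> s _; apply: subsetUl.
rewrite (chain_sum_fixpoints_le subset_rel_refl subset_rel_anti subset_rel_trans
  (img_cl h hh) k_cl (img_mono h) k_mono) //; last by move=> s _; apply: subsetUr.
Qed.

Lemma eq_fixed_cliques (g h : T -> T) : g =1 h -> fixed_cliques g = fixed_cliques h.
Proof. by move=> gh; apply/setP => s; rewrite !inE (eq_imset _ gh). Qed.

Lemma fixed_cliques_id : fixed_cliques id = cliques e.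
Proof. by apply/setP => s; rewrite inE imset_id eqxx andbT. Qed.

Lemma fixed_cliques_eq0 (g : T -> T) :
  (forall x, ~~ approx_fixed e g x) -> fixed_cliques g = set0.
Proof.
move=> noafix; apply/setP => s; rewrite !inE; apply/negbTE/negP.
case/andP=> /andP[/set0Pn[x xs] /cliqueP cl] /eqP gs.
have gxs : g x \in s by rewrite -gs imset_f.
by move: (noafix x); rewrite /approx_fixed cl.
Qed.

Lemma chain_sum_fixed_cliques_homotopic (f g : T -> T) : strongly_homotopic e f g ->
  chain_sum subset_rel (fixed_cliques f) = chain_sum subset_rel (fixed_cliques g).
Proof.
case=> m [H [_ [H0 [Hm Hcl]]]].
have close_steps t t' : (t <= m)%N -> (t' <= m)%N -> (t <= t'.+1)%N -> (t' <= t.+1)%N ->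
    close_maps (H^~ t) (H^~ t').
  move=> tm t'm tt' t't x y xy; case: (eqVneq (x, t) (y, t')) => [[<- <-] | ne].
    by rewrite /adjeq eqxx.
  by apply: Hcl => //; apply/eqP.
rewrite -(eq_fixed_cliques H0) -(eq_fixed_cliques Hm).
suff step t : (t <= m)%N ->
    chain_sum subset_rel (fixed_cliques (H^~ 0%N)) = chain_sum subset_rel (fixed_cliques (H^~ t)).
  exact: step (leqnn m).
elim: t => // t IH lt_tm; have le_tm := ltnW lt_tm; rewrite IH //.
by apply: chain_sum_fixed_cliques_close; apply: close_steps; lia.
Qed.

Lemma exists_approx_fixed (f : T -> T) :
  euler_char e <> 0 -> strongly_homotopic e f id -> exists x, approx_fixed e f x.
Proof.
move=> chi_neq0 /chain_sum_fixed_cliques_homotopic.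
have [/existsP // | /existsPn noafix] := boolP [exists x, approx_fixed e f x].
rewrite fixed_cliques_id chain_sum_cliques fixed_cliques_eq0 // chain_sum0 => chi_eq0.
by case: chi_neq0; lia.
Qed.

End FixedCliques.

Theorem theorem3p6 (T : finType) (e : rel T)
  (e_sym : symmetric e) (e_irr : irreflexive e)
  (hchi : euler_char e <> 0%R)
  (f : T -> T) (f_cont : dcontinuous e f)
  (f_htp : strongly_homotopic e f id) :
  (exists x, f x = x) \/
  (exists x y, x <> y /\ approx_fixed e f x /\ approx_fixed e f y).
Proof.
have [x afx] := exists_approx_fixed hchi f_htp.
have [fx | fxNx] := eqVneq (f x) x; [by left; exists x | right].
exists x, (f x); split; first by apply/eqP; rewrite eq_sym.
split => //; apply: f_cont.
by move: afx; rewrite /approx_fixed /adjeq (negbTE fxNx).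
Qed.
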